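(* Let $V$ be an $\mathrm{FI}_G$-module which is presented in finite degree and generated in degree $\le d$. Then $$\mathrm{dreg}(V)+1\le\mathrm{dwidth}(V)\le\mathrm{dreg}(V)+\max\{hd_1(V),d\},$$ with the conventions $\pm\infty+c=\pm\infty$.
   Context: Fix a commutative ring $k$ and a group $G$. $\mathrm{FI}_G$ is the category with objects $[n]$ ($n\ge0$) and morphisms $[n]\to[m]$ the pairs $(f,g)$ with $f$ injective and $g:[n]\to G$ a map of sets; composition $(f,g)\circ(f',g')=(f\circ f',h)$, $h(x)=g'(x)\,g(f'(x))$. $G_n=\mathfrak S_n\wr G$. An $\mathrm{FI}_G$-module is a functor $V:\mathrm{FI}_G\to\mathrm{Mod}_k$, $V_n=V([n])$. $M(n)_m=k[\mathrm{Hom}_{\mathrm{FI}_G}([n],[m])]$; for a $k[G_n]$-module $W$, $M(W)_m=W\otimes_{k[G_n]}k[\mathrm{Hom}_{\mathrm{FI}_G}([n],[m])]$; direct sums of these are relatively projective. $\deg V=\sup\{n:V_n\ne0\}$ ($\sup\emptyset=-\infty$). $H_0(V)_n=V_n/V_{<n}$ ($V_{<n}$ = span of images of all $V(f,g)$, $(f,g):[m]\to[n]$, $m<n$), $H_i$ left derived functors, $hd_i(V)=\deg H_i(V)$. Generated in degree $\le m$: surjection $\bigoplus M(n_i)\to V$, $n_i\le m$; related in degree $\le r$: exact $0\to K\to M\to V\to 0$, $M$ relatively projective, $K$ generated in degree $\le r$; presented in finite degree: both finite. $\Sigma$ sends $[n]\mapsto[n+1]$ and $(f,g)\mapsto(f_+,g_+)$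 ($f_+$ extends $f$ by $n+1\mapsto m+1$, $g_+$ extends $g$ by $n+1\mapsto1_G$); $SV=V\circ\Sigma$; $\iota:V\to SV$ is $V(f^n,\mathbf1)$ in degree $n$ ($f^n$ standard inclusion, $\mathbf 1$ trivial). $DV=\mathrm{coker}(\iota)$, $D^a$ its $a$-th iterate, $H_i^{D^a}$ left derived functors. $\mathrm{dreg}(V)=\sup_{a\ge1}\deg H_1^{D^a}(V)$, $\mathrm{dwidth}(V)=\sup_{a\ge1}(\deg H_1^{D^a}(V)+a)$, both in $\mathbb Z\cup\{\pm\infty\}$. *)

Set Warnings "-notation-overridden -ambiguous-paths".
From HB Require Import structures.
From mathcomp Require Import all_boot all_order all_algebra.
From Stdlib Require Import ClassicalEpsilon.
Set Warnings "-notation-overridden -ambiguous-paths".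

Set Implicit Arguments.
Unset Strict Implicit.
Unset Printing Implicit Defensive.

Import GRing.Theory.

Record hom (G : groupType) (n m : nat) := Hom {
  hf : 'I_n -> 'I_m;
  hinj : injective hf;
  hg : 'I_n -> G }.
Arguments Hom {G n m}.

Section FIG.
Variable G : groupType.
Local Open Scope group_scope.

Definition hid (n : nat) : hom G n n := Hom id (@inj_id _) (fun _ => 1).

Definition hcomp n m l (phi : hom G m l) (psi : hom G n m) : hom G n l :=
  Hom (hf phi \o hf psi) (inj_comp (@hinj G m l phi) (@hinj G n m psi))
      (fun x => hg psi x * hg phi (hf psi x)).

Lemma widen_ord_injS n : injective (@widen_ord n n.+1 (leqnSn n)).
Proof. move=> x y H; apply: val_inj; exact: (congr1 val H). Qed.

Definition hincl (n : nat) : hom G n n.+1 :=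
  Hom (widen_ord (leqnSn n)) (@widen_ord_injS n) (fun _ => 1).

(* Sigma on morphisms: f_+ extends f by n+1 |-> m+1, g_+ by n+1 |-> 1 *)
Definition sig_f n m (f : 'I_n -> 'I_m) (x : 'I_n.+1) : 'I_m.+1 :=
  match unlift ord_max x with
  | Some j => lift ord_max (f j)
  | None => ord_max
  end.

Lemma sig_f_inj n m (f : 'I_n -> 'I_m) : injective f -> injective (sig_f f).
Proof.
move=> finj x y; rewrite /sig_f.
case: (unliftP ord_max x) => [i ->|->]; case: (unliftP ord_max y) => [j ->|->] //.
- by move/lift_inj/finj => ->.
- by move=> H; have := neq_lift ord_max (f i); rewrite H eqxx.
- by move=> H; have := neq_lift ord_max (f j); rewrite -H eqxx.
Qed.

Definition sig_g n (g : 'I_n -> G) (x : 'I_n.+1) : G :=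
  match unlift ord_max x with Some j => g j | None => 1 end.

Definition hsig n m (phi : hom G n m) : hom G n.+1 m.+1 :=
  Hom (sig_f (hf phi)) (sig_f_inj (@hinj G n m phi)) (sig_g (hg phi)).

End FIG.

Section Modules.
Variables (k : comPzRingType) (G : groupType).
Local Open Scope ring_scope.

Record preFI := PreFI {
  Vm : nat -> lmodType k;
  Vact : forall n m, hom G n m -> Vm n -> Vm m }.
Arguments Vact p {n m} _ _.

(* functor laws: k-linearity, identities, composition, and dependence
   only on the pair (f, g) of functions *)
Definition FImod (V : preFI) : Prop :=
  [/\ (forall n m (phi : hom G n m) (a : k) x y,
         Vact V phi (a *: x + y) = a *: Vact V phi x + Vact V phi y),
      (forall n (x : Vm V n), Vact V (hid G n) x = x),
      (forall n m l (phi : hom G m l) (psi : hom G n m) x,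
         Vact V (hcomp phi psi) x = Vact V phi (Vact V psi x))
    & (forall n m (phi psi : hom G n m),
         hf phi =1 hf psi -> hg phi =1 hg psi -> Vact V phi =1 Vact V psi)].

Definition morph (V W : preFI) (p : forall n, Vm V n -> Vm W n) : Prop :=
  (forall n (a : k) (x y : Vm V n), p n (a *: x + y) = a *: p n x + p n y) /\
  (forall n m (phi : hom G n m) x, p m (Vact V phi x) = Vact W phi (p n x)).

Definition epi (V W : preFI) (p : forall n, Vm V n -> Vm W n) : Prop :=
  morph p /\ forall n (y : Vm W n), exists x, p n x = y.

Definition projective (P : preFI) : Prop :=
  FImod P /\
  forall (U W : preFI) (p : forall n, Vm U n -> Vm W n)
         (f : forall n, Vm P n -> Vm W n),
    FImod U -> FImod W -> epi p -> morph f ->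
    exists g : forall n, Vm P n -> Vm U n,
      morph g /\ forall n x, p n (g n x) = f n x.

Inductive span (T : lmodType k) (S : T -> Prop) : T -> Prop :=
  | span_in x : S x -> span S x
  | span_0 : span S 0
  | span_add x y : span S x -> span S y -> span S (x + y)
  | span_scale (a : k) x : span S x -> span S (a *: x).

(* V is generated in degree <= d : V_n is spanned by the images of
   elements of degree <= d (i.e. a surjection from a sum of M(n_i),
   n_i <= d, exists). *)
Definition gen_le (V : preFI) (d : int) : Prop :=
  forall n (x : Vm V n),
    span (fun y => exists m (phi : hom G m n) (z : Vm V m),
                     (m%:Z <= d)%R /\ y = Vact V phi z) x.

Definition sub_gen_le (M : preFI) (K : forall n, Vm M n -> Prop) (r : nat) :=
  forall n (x : Vm M n), K n x ->
    span (fun y => exists m (phi : hom G m n) (z : Vm M m),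
                     (m <= r)%N /\ K m z /\ y = Vact M phi z) x.

(* k[G_n]-modules, G_n = S_n wr G = End_{FI_G}([n]) *)
Record Gnmod (n : nat) := GnMod {
  Wc : lmodType k;
  Wact : hom G n n -> Wc -> Wc }.
Arguments Wact {n} g _ _.

Definition Gnmod_law n (W : Gnmod n) : Prop :=
  [/\ (forall s (a : k) x y, Wact W s (a *: x + y) = a *: Wact W s x + Wact W s y),
      (forall x, Wact W (hid G n) x = x),
      (forall s t x, Wact W (hcomp s t) x = Wact W s (Wact W t x))
    & (forall s t, hf s =1 hf t -> hg s =1 hg t -> Wact W s =1 Wact W t)].

Definition equivar n (W : Gnmod n) (U : preFI) (f : Wc W -> Vm U n) : Prop :=
  (forall (a : k) x y, f (a *: x + y) = a *: f x + f y) /\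
  (forall s x, f (Wact W s x) = Vact U s (f x)).

(* M is relatively projective: M is (isomorphic to) a direct sum of
   induced modules M(W_i) = W_i (x)_{k[G_{n_i}]} k[Hom([n_i], -)],
   expressed through the universal property
   Hom(+_i M(W_i), U) = prod_i Hom_{k[G_{n_i}]}(W_i, U_{n_i}). *)
Definition relproj (M : preFI) : Prop :=
  FImod M /\
  exists (I : Type) (dg : I -> nat) (W : forall i, Gnmod (dg i))
         (eta : forall i, Wc (W i) -> Vm M (dg i)),
    (forall i, Gnmod_law (W i)) /\ (forall i, equivar (eta i)) /\
    forall (U : preFI) (phi : forall i, Wc (W i) -> Vm U (dg i)),
      FImod U -> (forall i, equivar (phi i)) ->
      exists psi : forall n, Vm M n -> Vm U n,
        [/\ morph psi,
            (forall i w, psi (dg i) (eta i w) = phi i w)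
          & (forall psi' : forall n, Vm M n -> Vm U n, morph psi' ->
               (forall i w, psi' (dg i) (eta i w) = phi i w) ->
               forall n x, psi' n x = psi n x)].

Definition related_le (V : preFI) (r : nat) : Prop :=
  exists (M : preFI) (p : forall n, Vm M n -> Vm V n),
    relproj M /\ epi p /\ sub_gen_le (fun n x => p n x = 0) r.

Definition presented_fin (V : preFI) : Prop :=
  (exists d : nat, gen_le V d%:Z) /\ (exists r : nat, related_le V r).

Definition shift (V : preFI) : preFI :=
  {| Vm := fun n => Vm V n.+1; Vact := fun n m phi => Vact V (hsig phi) |}.

Definition iota (V : preFI) n : Vm V n -> Vm (shift V) n :=
  @Vact V n n.+1 (hincl G n).

Fixpoint Siter (a : nat) (V : preFI) : preFI :=
  match a with 0 => V | a'.+1 => shift (Siter a' V) end.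

(* a subquotient B/A of (the ambient module) V, given by predicates *)
Record subq (V : preFI) := SubQ {
  num : forall n, Vm V n -> Prop;
  den : forall n, Vm V n -> Prop }.
Arguments num {V} s n _.
Arguments den {V} s n _.

(* D(B/A) = coker(iota : B/A -> S(B/A)) = SB / (SA + iota(B)) *)
Definition Dq (V : preFI) (Q : subq V) : subq (shift V) :=
  {| num := fun n (x : Vm (shift V) n) => num Q n.+1 x;
     den := fun n (x : Vm (shift V) n) =>
       exists y z, den Q n.+1 y /\ num Q n z /\ x = y + iota z |}.

Fixpoint Diter (V : preFI) (a : nat) (Q : subq V) : subq (Siter a V) :=
  match a as a0 return subq (Siter a0 V) with
  | 0 => Q
  | a'.+1 => Dq (Diter a' Q)
  end.

(* H_0(B/A)_n = B_n / (A_n + span of images of B_m, m < n) *)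
Definition H0q (V : preFI) (Q : subq V) : subq V :=
  {| num := num Q;
     den := fun n => span (fun y => den Q n y \/
          exists m (phi : hom G m n) z, (m < n)%N /\ num Q m z /\ y = Vact V phi z) |}.

(* kernel of the map B1/A1 -> B2/A2 induced by B1 <= B2, A1 <= A2 *)
Definition kerq (V : preFI) (Q1 Q2 : subq V) : subq V :=
  {| num := fun n x => num Q1 n x /\ den Q2 n x; den := den Q1 |}.

Inductive eint := ENInf | EFin of int | EPInf.

Definition ele (x y : eint) : Prop :=
  match x, y with
  | ENInf, _ => True
  | _, EPInf => True
  | EFin a, EFin b => (a <= b)%R
  | _, _ => False
  end.

Definition eaddc (x : eint) (c : int) : eint :=
  match x with EFin a => EFin (a + c) | e => e end.

Definition eadd (x y : eint) : eint :=
  match x, y with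
  | EFin a, EFin b => EFin (a + b)
  | EPInf, _ | _, EPInf => EPInf
  | _, _ => ENInf
  end.

Definition emax (x y : eint) : eint :=
  match x, y with
  | ENInf, e | e, ENInf => e
  | EPInf, _ | _, EPInf => EPInf
  | EFin a, EFin b => EFin (Num.max a b)
  end.

Definition is_lub (S : eint -> Prop) (e : eint) : Prop :=
  (forall x, S x -> ele x e) /\ (forall u, (forall x, S x -> ele x u) -> ele e u).

(* supremum in Z u {+-oo} (sup of the empty set is -oo) *)
Definition esup (S : eint -> Prop) : eint :=
  epsilon (inhabits ENInf) (is_lub S).

Definition deg (V : preFI) (Q : subq V) : eint :=
  esup (fun e => exists n (x : Vm V n), e = EFin n%:Z /\ num Q n x /\ ~ den Q n x).

(* For a surjection pi : P -> V with P projective and K = ker pi,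
   H_1^{D^a}(V) = ker(D^a K -> D^a P), H_1(V) = ker(H_0 K -> H_0 P). *)
Section Presentation.
Variables (P V : preFI) (pi : forall n, Vm P n -> Vm V n).

Definition kerQ : subq P := {| num := fun n (x : Vm P n) => @pi n x = 0; den := fun n (x : Vm P n) => x = 0 |}.
Definition allQ : subq P := {| num := fun n (x : Vm P n) => True; den := fun n (x : Vm P n) => x = 0 |}.

Definition H1D (a : nat) : subq (Siter a P) := kerq (Diter a kerQ) (Diter a allQ).
Definition H1 : subq P := kerq (H0q kerQ) (H0q allQ).

Definition hd1 : eint := deg H1.

Definition dreg : eint :=
  esup (fun e => exists a : nat, (0 < a)%N /\ e = deg (H1D a)).

Definition dwidth : eint :=
  esup (fun e => exists a : nat, (0 < a)%N /\ e = eaddc (deg (H1D a)) a%:Z).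

End Presentation.
End Modules.

(* For a > max(d, hd_1 V) the module H_1^{D^a}(V) vanishes; both inequalities
   then follow by comparing suprema, since each a >= 1 contributes
   deg H_1^{D^a}(V) to dreg and deg H_1^{D^a}(V) + a to dwidth.

   Let P' be the submodule of P generated by its elements of degree <= d.  As V
   is generated in degree <= d, pi restricts to a surjection P' -> V, and
   projectivity of P lifts pi to f : P -> P'.  Vanishing of H_1(V) in degrees
   >= a makes ker(P' -> V) generated in degrees < a, and each application of D
   lowers the generation degree by one, so D^a kills it.  A class x of
   H_1^{D^a}(V) is then x = f x + (x - f x): the first summand factors through
   D^a ker(P' -> V) = 0, and the second is the image of a class vanishing in
   D^a P under id - f, which maps P into ker pi. *)

From HB Require Import structures.
From mathcomp Require Import all_boot all_order all_algebra perm zify.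
From mathcomp Require Import boolp.
From Stdlib Require Import ClassicalEpsilon.

Set Implicit Arguments.
Unset Strict Implicit.
Unset Printing Implicit Defensive.

Import Order.TTheory GRing.Theory Num.Theory.
Local Open Scope ring_scope.

Local Notation act V phi := (@Vact _ _ V _ _ phi).

Section Linear.
Variables (k : comPzRingType) (U W : lmodType k) (f : U -> W).
Hypothesis f_lin : linear f.

Let F : {linear U -> W} := HB.pack f (GRing.isLinear.Build k U W *:%R f f_lin).

Lemma linear_fun0 : f 0 = 0.
Proof. exact: (linear0 F). Qed.

Lemma linear_funD x y : f (x + y) = f x + f y.
Proof. exact: (linearD F). Qed.

Lemma linear_funB x y : f (x - y) = f x - f y.
Proof. exact: (linearB F). Qed.

End Linear.

Section Span.
Variable k : comPzRingType.
Implicit Types T : lmodType k.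

Definition subspace T (C : T -> Prop) : Prop :=
  C 0 /\ forall a x y, C x -> C y -> C (a *: x + y).

Lemma subspaceD T (C : T -> Prop) x y : subspace C -> C x -> C y -> C (x + y).
Proof. by case=> _ Clin Cx Cy; have := Clin 1 _ _ Cx Cy; rewrite scale1r. Qed.

Lemma span_subspace T (S : T -> Prop) : subspace (span S).
Proof. by split=> [|a x y Sx Sy]; [apply: span_0|apply/span_add/Sy/span_scale]. Qed.

Lemma span_closed T (S C : T -> Prop) x :
  subspace C -> (forall y, S y -> C y) -> span S x -> C x.
Proof.
move=> C_sub SC; elim=> [y /SC //| |y z _ Cy _ Cz|a y _ Cy].
- exact: C_sub.1.
- exact: subspaceD.
- by have := C_sub.2 a _ _ Cy C_sub.1; rewrite addr0.
Qed.

Lemma span_map T (T' : lmodType k) (F : T -> T') (S : T -> Prop) (S' : T' -> Prop) x :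
  linear F -> (forall y, S y -> span S' (F y)) -> span S x -> span S' (F x).
Proof.
move=> F_lin SS'; apply: (@span_closed _ _ (fun y => span S' (F y))) => //.
split=> [|a y z Sy Sz]; first by rewrite linear_fun0 //; apply: span_0.
by rewrite F_lin; apply: (span_subspace S').2.
Qed.

Lemma span_trans T (S S' : T -> Prop) x :
  (forall y, S y -> span S' y) -> span S x -> span S' x.
Proof. by apply: (@span_map _ _ id) => a u v. Qed.

Lemma span_mono T (S S' : T -> Prop) x :
  (forall y, S y -> S' y) -> span S x -> span S' x.
Proof. by move=> SS'; apply: span_trans => y /SS'; exact: span_in. Qed.

End Span.

Section Submodule.
Variables (k : comPzRingType) (T : lmodType k) (S : T -> Prop).
Hypothesis S_sub : subspace S.

Definition submod_pred (x : T) : bool := `[< S x >].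

Lemma submod_pred_closed : submod_closed submod_pred.
Proof.
split; first exact/asboolP/S_sub.1.
by move=> a x y /asboolP Sx /asboolP Sy; apply/asboolP; apply: S_sub.2.
Qed.

HB.instance Definition _ := GRing.isSubmodClosed.Build k T submod_pred
  (GRing.submod_closed_semi submod_pred_closed).

Record submod := Submod { submod_val :> T; _ : submod_pred submod_val }.
HB.instance Definition _ := [isSub for submod_val].
HB.instance Definition _ := [Choice of submod by <:].
HB.instance Definition _ := [SubChoice_isSubLmodule of submod by <:].

Definition submodType : lmodType k := submod.

Lemma submodP (x : submodType) : S (val x).
Proof. by apply/asboolP; case: x. Qed.

Definition insubmod x (Sx : S x) : submodType := Submod (introT (asboolP _) Sx).

End Submodule.

Arguments insubmod {k T S S_sub x}.

Lemma ele_trans x y z : ele x y -> ele y z -> ele x z.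
Proof. by case: x => [|a|]; case: y => [|b|]; case: z => [|c|] //=; lia. Qed.

Lemma int_max_exists (Z : int -> Prop) z0 b :
  Z z0 -> (forall z, Z z -> z <= b) -> exists2 m, Z m & forall z, Z z -> z <= m.
Proof.
move=> Zz0 Zb.
have ex : exists t : nat, `[< Z (b - t%:Z) >].
  exists `|b - z0|%N; apply/asboolP.
  by have -> : b - (`|b - z0|%N)%:Z = z0 by have := Zb _ Zz0; lia.
case: (ex_minnP ex) => t /asboolP Zt t_min; exists (b - t%:Z) => // z Zz.
have : (t <= `|b - z|%N)%N.
  apply: t_min; apply/asboolP.
  by have -> : b - (`|b - z|%N)%:Z = z by have := Zb _ Zz; lia.
by have := Zb _ Zz; lia.
Qed.

Lemma lub_exists (S : eint -> Prop) : exists e, is_lub S e.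
Proof.
have [SP|SnP] := pselect (S EPInf).
  by exists EPInf; split => [x _|u /(_ _ SP)]; [case: x|].
have [[z0 Sz0]|Snfin] := pselect (exists z, S (EFin z)); last first.
  exists ENInf; split => [[|z Sz|] //|//].
  by apply: Snfin; exists z.
have [[b Sb]|Sunb] := pselect (exists b, forall z, S (EFin z) -> z <= b); last first.
  exists EPInf; split => [[] |[/(_ _ Sz0) //|c Sc|//]] //.
  by apply: Sunb; exists c => z /Sc.
have [m Sm m_max] := int_max_exists Sz0 Sb.
exists (EFin m); split => [[|z /m_max|] //|u /(_ _ Sm) //].
Qed.

Lemma esup_lub (S : eint -> Prop) : is_lub S (esup S).
Proof. by apply: epsilon_spec; apply: lub_exists. Qed.

Lemma esup_ub (S : eint -> Prop) x : S x -> ele x (esup S).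
Proof. exact: (esup_lub S).1. Qed.

Lemma esup_le (S : eint -> Prop) u : (forall x, S x -> ele x u) -> ele (esup S) u.
Proof. exact: (esup_lub S).2. Qed.

Lemma eaddc_esup_le (S : eint -> Prop) c w :
  (forall x, S x -> ele (eaddc x c) w) -> ele (eaddc (esup S) c) w.
Proof.
case: w => [|b|] Sw; last by case: (esup S).
- suff : ele (esup S) ENInf by case: (esup S).
  by apply: esup_le => -[|a|] /Sw.
- suff : ele (esup S) (EFin (b - c)) by case: (esup S) => //= a; lia.
  by apply: esup_le => -[|a|] /Sw //=; lia.
Qed.

Lemma eaddc_le x c c' : c <= c' -> ele (eaddc x c) (eaddc x c').
Proof. by case: x => //= a; lia. Qed.

Lemma eaddc_le_eadd x y z c :
  ele x y -> ele (EFin c) z -> ele (eaddc x c) (eadd y z).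
Proof. by case: x => [|a|]; case: y => [|b|]; case: z => [|e|] //=; lia. Qed.

Lemma ele_emaxl x y : ele x (emax x y).
Proof. by case: x => [|a|]; case: y => [|b|] //=; rewrite le_max lexx. Qed.

Lemma ele_emaxr x y : ele y (emax x y).
Proof. by case: x => [|a|]; case: y => [|b|] //=; rewrite le_max lexx orbT. Qed.

Section Degree.
Variables (k : comPzRingType) (G : groupType) (V : preFI k G) (Q : subq V).

Lemma deg_ge n (x : Vm V n) : num Q x -> ~ den Q x -> ele (EFin n%:Z) (deg Q).
Proof. by move=> Qx Qnx; apply: esup_ub; exists n, x. Qed.

Lemma deg_ninf : (forall n (x : Vm V n), num Q x -> den Q x) -> deg Q = ENInf.
Proof.
move=> Qvan; suff : ele (deg Q) ENInf by case: (deg Q).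
by apply: esup_le => e [n [x [_ [Qx []]]]]; apply: Qvan.
Qed.

Lemma den_above_deg n (x : Vm V n) : ~ ele (EFin n%:Z) (deg Q) -> num Q x -> den Q x.
Proof. by move=> n_deg Qx; apply: contra_notP n_deg; apply: deg_ge. Qed.

End Degree.

Section FImodules.
Variables (k : comPzRingType) (G : groupType).
Implicit Types V W : preFI k G.

Lemma FImod_linear V n m (phi : hom G n m) : FImod V -> linear (act V phi).
Proof. by case=> V_lin _ _ _ a x y; apply: V_lin. Qed.

Lemma FImod_id V n (x : Vm V n) : FImod V -> act V (hid G n) x = x.
Proof. by case=> _ V_id _ _; apply: V_id. Qed.

Lemma FImod_comp V n m l (phi : hom G m l) (psi : hom G n m) x : FImod V ->
  act V (hcomp phi psi) x = act V phi (act V psi x).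
Proof. by case=> _ _ V_comp _; apply: V_comp. Qed.

Lemma FImod_ext V n m (phi psi : hom G n m) x : FImod V ->
  hf phi =1 hf psi -> hg phi =1 hg psi -> act V phi x = act V psi x.
Proof. by case=> _ _ _ V_ext ef eg; apply: V_ext. Qed.

Lemma morph_linear V W (p : forall n, Vm V n -> Vm W n) n : morph p -> linear (p n).
Proof. by case=> p_lin _ a x y; apply: p_lin. Qed.

Lemma morph_nat V W (p : forall n, Vm V n -> Vm W n) n m (phi : hom G n m) x :
  morph p -> p m (act V phi x) = act W phi (p n x).
Proof. by case=> _ p_nat; apply: p_nat. Qed.

Lemma morph_comp U V W (p : forall n, Vm U n -> Vm V n) (q : forall n, Vm V n -> Vm W n) :
  morph p -> morph q -> morph (fun n x => q n (p n x)).
Proof.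
move=> p_morph q_morph; split=> [n a x y|n m phi x].
  by rewrite (morph_linear p_morph) (morph_linear q_morph).
by rewrite (morph_nat _ _ p_morph) (morph_nat _ _ q_morph).
Qed.

Lemma sig_f_lift n m (f : 'I_n -> 'I_m) j : sig_f f (lift ord_max j) = lift ord_max (f j).
Proof. by rewrite /sig_f liftK. Qed.

Lemma sig_f_max n m (f : 'I_n -> 'I_m) : sig_f f ord_max = ord_max.
Proof. by rewrite /sig_f unlift_none. Qed.

Lemma sig_g_lift n (g : 'I_n -> G) j : sig_g g (lift ord_max j) = g j.
Proof. by rewrite /sig_g liftK. Qed.

Lemma sig_g_max n (g : 'I_n -> G) : sig_g g ord_max = 1%g.
Proof. by rewrite /sig_g unlift_none. Qed.

Definition sigE := (sig_f_lift, sig_f_max, sig_g_lift, sig_g_max).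

Lemma FImod_shift V : FImod V -> FImod (shift V).
Proof.
case=> V_lin V_id V_comp V_ext; split => /=.
- by move=> n m phi a x y; apply: V_lin.
- move=> n x; rewrite -[RHS](V_id n.+1 x); apply: V_ext => y;
  by case: (unliftP ord_max y) => [j ->|->]; rewrite /= !sigE.
- move=> n m l phi psi x; rewrite -V_comp; apply: V_ext => y;
  by case: (unliftP ord_max y) => [j ->|->]; rewrite /= !sigE ?mulg1.
- move=> n m phi psi ef eg x; apply: V_ext => y;
  by case: (unliftP ord_max y) => [j ->|->]; rewrite /= !sigE ?ef ?eg.
Qed.

Lemma FImod_Siter V a : FImod V -> FImod (Siter a V).
Proof. by move=> V_mod; elim: a => //= a; apply: FImod_shift. Qed.

Fixpoint Smap V W (p : forall n, Vm V n -> Vm W n) (a : nat) :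
  forall n, Vm (Siter a V) n -> Vm (Siter a W) n :=
  match a return forall n, Vm (Siter a V) n -> Vm (Siter a W) n with
  | 0 => p
  | a'.+1 => fun n => @Smap V W p a' n.+1
  end.
#[global] Arguments Smap {V W} p a%_N n%_N _.

Lemma morph_Smap V W (p : forall n, Vm V n -> Vm W n) a : morph p -> morph (Smap p a).
Proof.
move=> p_morph; elim: a => //= a [p_lin p_nat].
by split=> [n|n m phi]; [apply: p_lin|apply: p_nat].
Qed.

End FImodules.

Section Subquotients.
Variables (k : comPzRingType) (G : groupType).
Implicit Types V W : preFI k G.

Definition subq_closed W (Q : subq W) : Prop :=
  [/\ forall n, subspace (fun x : Vm W n => num Q x),
      forall n m (phi : hom G n m) x, num Q x -> num Q (act W phi x)
    & forall n, subspace (fun x : Vm W n => den Q x)].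

Lemma subq_closed_Dq W (Q : subq W) : FImod W -> subq_closed Q -> subq_closed (Dq Q).
Proof.
move=> W_mod [Qnum Qact Qden]; split=> [n|n m phi x|n] //=.
- exact: (Qact _ _ (hsig phi)).
- have iota_lin := FImod_linear (hincl G n) W_mod.
  split=> [|a x y [x1 [x2 [Dx1 [Nx2 ->]]]] [y1 [y2 [Dy1 [Ny2 ->]]]]].
    exists 0, 0; rewrite /iota linear_fun0 // addr0.
    by split; [exact: (Qden _).1|split; [exact: (Qnum _).1|]].
  exists (a *: x1 + y1), (a *: x2 + y2); split; first exact: (Qden _).2.
  split; first exact: (Qnum _).2.
  by rewrite /iota iota_lin scalerDr addrACA.
Qed.

Lemma subq_closed_Diter W (Q : subq W) a :
  FImod W -> subq_closed Q -> subq_closed (Diter a Q).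
Proof.
move=> W_mod Q_closed; elim: a => //= a IH.
by apply: subq_closed_Dq => //; apply: FImod_Siter.
Qed.

Definition subq_map V W (h : forall n, Vm V n -> Vm W n) (Q : subq V) (Q' : subq W) :=
  (forall n (x : Vm V n), num Q x -> num Q' (h n x)) /\
  (forall n (x : Vm V n), den Q x -> den Q' (h n x)).

Lemma subq_map_Dq V W (h : forall n, Vm V n -> Vm W n) Q Q' :
  morph h -> subq_map h Q Q' -> subq_map (Smap h 1) (Dq Q) (Dq Q').
Proof.
move=> h_morph [hnum hden]; split=> [n x|n x [y [z [Dy [Nz ->]]]]] /=.
  exact: hnum.
exists (h n.+1 y), (h n z); split; first exact: hden.
split; first exact: hnum.
by rewrite (linear_funD (morph_linear h_morph)) /iota (morph_nat _ _ h_morph).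
Qed.

Lemma subq_map_Diter V W (h : forall n, Vm V n -> Vm W n) Q Q' a :
  morph h -> subq_map h Q Q' -> subq_map (Smap h a) (Diter a Q) (Diter a Q').
Proof.
move=> h_morph hQ; elim: a => //= a IH.
exact: (subq_map_Dq (morph_Smap a h_morph) IH).
Qed.

Lemma subq_closed_kerQ V W (p : forall n, Vm V n -> Vm W n) :
  FImod W -> morph p -> subq_closed (kerQ p).
Proof.
move=> W_mod p_morph; split=> [n|n m phi x /= px0|n] /=.
- split=> [|a x y px py] /=; first exact: linear_fun0 (morph_linear p_morph).
  by rewrite (morph_linear p_morph) px py scaler0 addr0.
- by rewrite (morph_nat _ _ p_morph) px0 (linear_fun0 (FImod_linear _ W_mod)).
- by split=> [|a x y -> ->] //; rewrite scaler0 addr0.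
Qed.

End Subquotients.

Section BoundedImages.
Variables (k : comPzRingType) (G : groupType).

Definition gen_set (U : preFI k G) (d : int) {n} (y : Vm U n) : Prop :=
  exists m (phi : hom G m n) (z : Vm U m), (m%:Z <= d)%R /\ y = act U phi z.

Definition image_lt (V : preFI k G) (K : forall n, Vm V n -> Prop) (e : nat)
    {n} (y : Vm V n) : Prop :=
  exists m (phi : hom G m n) z, (m < e)%N /\ K m z /\ y = act V phi z.

Lemma span_image_lt_act (V : preFI k G) (K : forall n, Vm V n -> Prop) e n m
    (phi : hom G n m) (x : Vm V n) :
  FImod V -> span (image_lt K e) x -> span (image_lt K e) (act V phi x).
Proof.
move=> V_mod; apply: span_map; first exact: FImod_linear.
move=> _ [p [psi [z [p_e [Kz ->]]]]]; apply: span_in.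
by exists p, (hcomp phi psi), z; rewrite FImod_comp.
Qed.

End BoundedImages.

Lemma ord_lt_max n (x : 'I_n.+1) : x != ord_max -> (x < n)%N.
Proof. by rewrite -val_eqE /= => x_n; rewrite ltn_neqAle x_n -ltnS ltn_ord. Qed.

Definition lower_ord n (x : 'I_n.+1) (x_n : x != ord_max) : 'I_n := Ordinal (ord_lt_max x_n).

Lemma lift_lower_ord n (x : 'I_n.+1) (x_n : x != ord_max) : lift ord_max (lower_ord x_n) = x.
Proof. by apply: val_inj; rewrite /= /bump leqNgt (ord_lt_max x_n). Qed.

Lemma widen_lower_ord n (x : 'I_n.+1) (x_n : x != ord_max) :
  widen_ord (leqnSn n) (lower_ord x_n) = x.
Proof. exact: val_inj. Qed.

Section DerivativeGeneration.
Variables (k : comPzRingType) (G : groupType) (W : preFI k G).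
Hypothesis W_mod : FImod W.

Variable Q : subq W.
Hypothesis Q_closed : subq_closed Q.

Lemma Dq_den_of_max_not_hit n m (phi : hom G m n.+1) (z : Vm W m) :
  num Q z -> (forall i, hf phi i != ord_max) -> den (Dq Q) (act W phi z : Vm (shift W) n).
Proof.
move=> Qz phi_max.
have psi_inj : injective (fun i => lower_ord (phi_max i)).
  by move=> i i' /(congr1 val) /= /val_inj /(@hinj _ _ _ phi).
pose psi : hom G m n := Hom (fun i => lower_ord (phi_max i)) psi_inj (hg phi).
have [_ Qact Qden] := Q_closed.
exists 0, (act W psi z); split; first exact: (Qden _).1.
split; first exact: Qact.
rewrite add0r /iota -FImod_comp //.
apply: (FImod_ext z W_mod) => x /=; first by rewrite widen_lower_ord.
by rewrite mulg1.
Qed.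

Lemma Dq_image_of_max_hit n m (phi : hom G m.+1 n.+1) (z : Vm W m.+1) j :
  num Q z -> hf phi j = ord_max ->
  exists psi : hom G m n, exists2 z' : Vm (shift W) m,
    num (Dq Q) z' & act W phi z = act (shift W) psi z'.
Proof.
move=> Qz phi_j; pose t := tperm j ord_max.
have phi_t i : hf phi (t (lift ord_max i)) != ord_max.
  rewrite -phi_j; apply: contraTneq isT => /(@hinj _ _ _ phi) /(canRL (tpermK _ _)).
  by rewrite tpermL => /eqP; rewrite eq_sym (negbTE (neq_lift _ _)).
have psi_inj : injective (fun i => lower_ord (phi_t i)).
  move=> i i' /(congr1 val) /= /val_inj /(@hinj _ _ _ phi) /perm_inj.
  exact: lift_inj.
pose psi : hom G m n := Hom (fun i => lower_ord (phi_t i)) psi_inj (fun _ => 1%g).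
pose sg : hom G m.+1 m.+1 := Hom t (@perm_inj _ t) (hg phi).
exists psi, (act W sg z); first by have [_ Qact _] := Q_closed; apply: Qact.
rewrite /= -FImod_comp //; apply: (FImod_ext z W_mod) => x /=.
- case: (unliftP ord_max (t x)) => [i t_x|t_x]; rewrite t_x !sigE.
    by rewrite lift_lower_ord -t_x tpermK.
  by move/(congr1 t): t_x; rewrite tpermK tpermR => ->.
- by case: (unliftP ord_max (t x)) => [i ->|->]; rewrite !sigE mulg1.
Qed.

Lemma Dq_step e n m (phi : hom G m n.+1) (z : Vm W m) : (m < e)%N -> num Q z ->
  den (Dq Q) (act W phi z : Vm (shift W) n) \/
  image_lt (fun p (x : Vm (shift W) p) => num (Dq Q) x) e.-1 (act W phi z).
Proof.
move=> m_e Qz; case: (boolP [exists j, hf phi j == ord_max]) => [/existsP[j /eqP phi_j]|].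
  right; case: m phi z m_e Qz j phi_j => [|m] phi z m_e Qz j; first by case: j.
  move=> phi_j.
  have [psi [z' Dz' ->]] := Dq_image_of_max_hit Qz phi_j.
  by exists m, psi, z'; split=> //; lia.
rewrite negb_exists => /forallP phi_max; left.
exact: Dq_den_of_max_not_hit.
Qed.

End DerivativeGeneration.

Section DerivativeVanishing.
Variables (k : comPzRingType) (G : groupType).

Lemma Diter_span_image (W : preFI k G) (Q : subq W) e :
  FImod W -> subq_closed Q ->
  (forall n (x : Vm W n), num Q x -> span (image_lt (fun p (y : Vm W p) => num Q y) e) x) ->
  forall b n (x : Vm (Siter b W) n), num (Diter b Q) x ->
  span (fun y => den (Diter b Q) y \/
                 image_lt (fun p (y : Vm (Siter b W) p) => num (Diter b Q) y) (e - b) y) x.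
Proof.
move=> W_mod Q_closed Q_gen; elim=> [|b IH] n x Qx.
  by rewrite subn0; apply: span_mono (Q_gen _ _ Qx) => y; right.
have [QD_num _ _] := subq_closed_Diter b W_mod Q_closed.
apply: span_mono (IH n.+1 x Qx) => y [Dy|[m [phi [z [m_e [Qz ->]]]]]].
  left; exists y, 0; split=> //; split; first exact: (QD_num n).1.
  by rewrite /iota linear_fun0 ?addr0 //; apply/FImod_linear/FImod_Siter.
rewrite subnS; apply: Dq_step => //; first exact: FImod_Siter.
exact: subq_closed_Diter.
Qed.

Lemma Diter_vanish (W : preFI k G) (Q : subq W) e b :
  FImod W -> subq_closed Q ->
  (forall n (x : Vm W n), num Q x -> span (image_lt (fun p (y : Vm W p) => num Q y) e) x) ->
  (e <= b)%N -> forall n (x : Vm (Siter b W) n), num (Diter b Q) x -> den (Diter b Q) x.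
Proof.
move=> W_mod Q_closed Q_gen e_b n x /(Diter_span_image W_mod Q_closed Q_gen).
have [_ _ QD_den] := subq_closed_Diter b W_mod Q_closed.
apply: span_closed => // y [//|[m [_ [_ [m_lt _]]]]].
by move: m_lt; rewrite (eqP e_b).
Qed.

End DerivativeVanishing.

Section GeneratedSubmodule.
Variables (k : comPzRingType) (G : groupType) (P : preFI k G) (d : int).
Hypothesis P_mod : FImod P.

Definition gen_span n (x : Vm P n) : Prop := span (gen_set d) x.

Lemma gen_span_self n (x : Vm P n) : (n%:Z <= d)%R -> gen_span x.
Proof. by move=> n_d; apply: span_in; exists n, (hid G n), x; rewrite FImod_id. Qed.

Lemma gen_span_act n m (phi : hom G n m) (x : Vm P n) : gen_span x -> gen_span (act P phi x).
Proof.
apply: span_map; first exact: FImod_linear.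
move=> _ [p [psi [z [p_d ->]]]]; apply: span_in.
by exists p, (hcomp phi psi), z; rewrite FImod_comp.
Qed.

Definition gen_sub : preFI k G :=
  {| Vm n := submodType (span_subspace (gen_set d (U := P) (n := n)));
     Vact n m phi x := insubmod (gen_span_act phi (submodP x)) |}.

Definition gen_incl n (x : Vm gen_sub n) : Vm P n := val x.

Lemma gen_incl_act n m (phi : hom G n m) (x : Vm gen_sub n) :
  gen_incl (act gen_sub phi x) = act P phi (gen_incl x).
Proof. by []. Qed.

Lemma gen_incl_lin n : linear (@gen_incl n).
Proof. by []. Qed.

Lemma gen_incl_inj n : injective (@gen_incl n).
Proof. exact: val_inj. Qed.

Lemma morph_gen_incl : morph gen_incl.
Proof. by split. Qed.

Lemma gen_sub_gen_le : gen_le gen_sub d.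
Proof.
move=> n y; suff [x /gen_incl_inj -> //] :
  exists2 x : Vm gen_sub n, gen_incl x = gen_incl y & span (gen_set d) x.
move: (submodP y); apply: (span_closed (C := fun u =>
  exists2 x : Vm gen_sub n, gen_incl x = u & span (gen_set d) x)).
  split=> [|a _ _ [x <- Sx] [x' <- Sx']]; first by exists 0 => //; apply: span_0.
  by exists (a *: x + x') => //; apply: (span_subspace _).2.
move=> _ [m [phi [z [m_d ->]]]].
exists (act gen_sub phi (insubmod (gen_span_self z m_d))) => //.
by apply: span_in; exists m, phi, (insubmod (gen_span_self z m_d)).
Qed.

Lemma FImod_gen_sub : FImod gen_sub.
Proof.
have [P_lin P_id P_comp P_ext] := P_mod.
split=> [n m phi a x y|n x|n m l phi psi x|n m phi psi ef eg x]; apply: gen_incl_inj.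
- exact: P_lin.
- exact: P_id.
- exact: P_comp.
- exact: P_ext.
Qed.

End GeneratedSubmodule.

Arguments gen_incl {k G P d P_mod} [n].

Section Presentation.
Variables (k : comPzRingType) (G : groupType) (V P : preFI k G).
Variables (pi : forall n, Vm P n -> Vm V n) (d : int).
Hypotheses (V_mod : FImod V) (P_proj : projective P) (pi_epi : epi pi) (V_gen : gen_le V d).

Let P_mod : FImod P := P_proj.1.
Local Notation P' := (gen_sub d P_mod).

Definition gen_pi n (x : Vm P' n) : Vm V n := pi (gen_incl x).

Lemma epi_gen_pi : epi gen_pi.
Proof.
split; first exact: morph_comp (morph_gen_incl _ _) pi_epi.1.
move=> n y; move: (V_gen y); apply: (span_closed (C := fun y => exists x, gen_pi x = y)).
  split=> [|a _ _ [x <-] [x' <-]]; last by exists (a *: x + x'); rewrite /gen_pi pi_epi.1.1.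
  by exists 0; rewrite /gen_pi (linear_fun0 (morph_linear pi_epi.1)).
move=> _ [m [phi [z [m_d ->]]]]; have [z' <-] := pi_epi.2 m z.
exists (act P' phi (insubmod (gen_span_self P_mod z' m_d))).
by rewrite /gen_pi gen_incl_act (morph_nat _ _ pi_epi.1).
Qed.

Lemma gen_pi_lift :
  exists2 f : forall n, Vm P n -> Vm P' n, morph f & forall n x, gen_pi (f n x) = pi x.
Proof.
have [_ P_lift] := P_proj.
have [f [f_morph f_lift]] := P_lift _ _ _ _ (FImod_gen_sub _ _) V_mod epi_gen_pi pi_epi.1.
by exists f.
Qed.

Section Lift.
Variables (f : forall n, Vm P n -> Vm P' n) (a : nat).
Hypotheses (f_morph : morph f) (f_lift : forall n (x : Vm P n), gen_pi (f x) = pi x).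
Hypotheses (d_a : d < a%:Z)
  (H1_vanish : forall m (y : Vm P m), (a <= m)%N -> num (H1 pi) y -> den (H1 pi) y).

Lemma ker_gen_pi_gen m (y : Vm P' m) :
  gen_pi y = 0 -> span (image_lt (fun p (z : Vm P' p) => gen_pi z = 0) a) y.
Proof.
have P'_mod := FImod_gen_sub d P_mod.
elim/ltn_ind: m y => m IH y y_ker; have [m_a|a_m] := ltnP m a.
  by apply: span_in; exists m, (hid G m), y; rewrite FImod_id.
have lower p (phi : hom G p m) z : (p < m)%N -> gen_pi z = 0 ->
    span (image_lt (fun p (z : Vm P' p) => gen_pi z = 0) a) (act P' phi z).
  by move=> p_m z_ker; apply: span_image_lt_act (IH p p_m z z_ker).
have ->: y = f (gen_incl y) + (y - f (gen_incl y)) by rewrite addrC subrK.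
apply: subspaceD; first exact: span_subspace.
- have: den (H1 pi) (gen_incl y).
    apply: H1_vanish => //; split; first exact: y_ker.
    apply: span_mono (submodP y) => _ [p [phi [z [p_d ->]]]].
    by right; exists p, phi, z; split=> //; lia.
  apply: span_map; first exact: morph_linear.
  move=> _ [->|[p [phi [z [p_m [z_ker ->]]]]]].
    by rewrite (linear_fun0 (morph_linear f_morph)); apply: span_0.
  by rewrite (morph_nat _ _ f_morph); apply: lower; rewrite // f_lift.
- move: (gen_sub_gen_le y).
  apply: (span_map (F := fun x : Vm P' m => x - f (gen_incl x))).
    by move=> c u v; rewrite (morph_linear f_morph) scalerBr addrACA opprD.
  move=> _ [p [phi [z [p_d ->]]]].
  rewrite gen_incl_act (morph_nat _ _ f_morph) -(linear_funB (FImod_linear _ _)) //.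
  apply: lower; first by lia.
  by rewrite /gen_pi (linear_funB (morph_linear pi_epi.1)) -f_lift subrr.
Qed.

Definition ker_proj n (u : Vm P n) : Vm P n := u - gen_incl (f u).

Lemma morph_ker_proj : morph ker_proj.
Proof.
split=> [n c u v|n m phi u]; rewrite /ker_proj.
  by rewrite (morph_linear f_morph) gen_incl_lin scalerBr addrACA opprD.
by rewrite (morph_nat _ _ f_morph) gen_incl_act (linear_funB (FImod_linear _ P_mod)).
Qed.

Lemma Smap_ker_proj b n (x : Vm (Siter b P) n) :
  Smap ker_proj b n x = x - Smap gen_incl b n (Smap f b n x).
Proof. by elim: b n x => [|b IH] n x //=; apply: IH. Qed.

Lemma H1D_vanish n (x : Vm (Siter a P) n) : num (H1D pi a) x -> den (H1D pi a) x.
Proof.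
move=> [Kx Ax]; have P'_mod := FImod_gen_sub d P_mod.
have f_ker : subq_map f (kerQ pi) (kerQ gen_pi).
  by split=> m u /= => [u_ker|->]; rewrite ?f_lift // (linear_fun0 (morph_linear f_morph)).
have incl_ker : subq_map gen_incl (kerQ gen_pi) (kerQ pi) by split=> m u /= => [|->].
have proj_ker : subq_map ker_proj (allQ P) (kerQ pi).
  split=> m u /= => [_|->]; rewrite /ker_proj.
    by rewrite (linear_funB (morph_linear pi_epi.1)) -f_lift subrr.
  by rewrite (linear_fun0 (morph_linear f_morph)) subrr.
have fx_den : den (Diter a (kerQ gen_pi)) (Smap f a n x).
  have K'_closed := subq_closed_kerQ V_mod epi_gen_pi.1.
  apply: (Diter_vanish P'_mod K'_closed ker_gen_pi_gen (leqnn a)).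
  exact: (subq_map_Diter a f_morph f_ker).1.
have [_ _ KD_den] := subq_closed_Diter a P_mod (subq_closed_kerQ V_mod pi_epi.1).
have := subspaceD (KD_den n) ((subq_map_Diter a morph_ker_proj proj_ker).2 _ _ Ax)
  ((subq_map_Diter a (morph_gen_incl _ _) incl_ker).2 _ _ fx_den).
by rewrite Smap_ker_proj subrK.
Qed.

End Lift.

Lemma H1D_deg_ninf a :
  d < a%:Z -> (forall m (y : Vm P m), (a <= m)%N -> num (H1 pi) y -> den (H1 pi) y) ->
  deg (H1D pi a) = ENInf.
Proof.
move=> d_a H1_vanish; have [f f_morph f_lift] := gen_pi_lift.
exact/deg_ninf/(H1D_vanish f_morph f_lift d_a H1_vanish).
Qed.

Lemma H1D_deg_le a : deg (H1D pi a) <> ENInf -> ele (EFin a%:Z) (emax (hd1 pi) (EFin d)).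
Proof.
move=> H1D_nz; apply: contra_notP H1D_nz => a_big; apply: H1D_deg_ninf.
  have [//|a_d] := ltrP d a%:Z.
  by case: a_big; apply: ele_trans (ele_emaxr _ _).
move=> m y a_m; apply: den_above_deg => m_hd; apply: a_big.
by apply: ele_trans (ele_emaxl _ _); apply: ele_trans m_hd => /=; rewrite lez_nat.
Qed.

End Presentation.

Theorem mainTheorem11 (k : comPzRingType) (G : groupType) (V : preFI k G) (d : int)
  (P : preFI k G) (pi : forall n, Vm P n -> Vm V n) :
  FImod V -> presented_fin V -> gen_le V d ->
  projective P -> epi pi ->
  ele (eaddc (dreg pi) 1) (dwidth pi) /\
  ele (dwidth pi) (eadd (dreg pi) (emax (hd1 pi) (EFin d))).
Proof.
move=> V_mod _ V_gen P_proj pi_epi; split.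
- apply: eaddc_esup_le => _ [a [a_pos ->]].
  apply: (@ele_trans _ (eaddc (deg (H1D pi a)) a%:Z)); first by apply: eaddc_le.
  by apply: esup_ub; exists a.
- apply: esup_le => _ [a [a_pos ->]].
  have [->|H1D_nz] := pselect (deg (H1D pi a) = ENInf); first by [].
  apply: eaddc_le_eadd; first by apply: esup_ub; exists a.
  exact: H1D_deg_le.
Qed.
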